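(* Fix $a\ge0$. For every $x\ge0$ and $\varepsilon>0$, almost surely: (i) $t\mapsto R^{(x+\varepsilon)}(t)-R^{(x)}(t)$ is non-increasing on $[0,\infty)$ and takes values in $[-\varepsilon,0]$; (ii) $t\mapsto U^{(x+\varepsilon)}(t)-U^{(x)}(t)$ is non-increasing on $[0,\infty)$ and takes values in $[0,\varepsilon]$; (iii) $t\mapsto L^{(x+\varepsilon)}(t)-L^{(x)}(t)$ is non-decreasing on $[0,\infty)$ and takes values in $[0,\varepsilon]$.
   Context: $X$ is a real-valued Lévy process with $X(0)=0$ under $\mathbb{P}$; $N_r$ is an independent Poisson process of rate $r>0$ with arrival times $0<T_1<T_2<\cdots$, $T_0:=0$. For $y\ge0$ let $X^{(y)}:=X+y$. Given $a\ge0$, $(U^{(y)},L^{(y)},R^{(y)})$ denotes the periodic-classical barrier strategy at $a$ driven by $X^{(y)}$, constructed recursively: $U^{(y)}=X^{(y)}-L^{(y)}+R^{(y)}$; $L^{(y)}(0)=0$ and $L^{(y)}$ is constant on each $[T_k,T_{k+1})$; on $[T_k,T_{k+1})$, with $Y(t):=U^{(y)}(T_k)+X(t)-X(T_k)$ (where $U^{(y)}(T_0):=y$), $R^{(y)}(t)=R^{(y)}(T_k)+\max\{0,\sup_{s\in[T_k,t]}(-Y(s))\}$ (with $R^{(y)}(T_0):=0$) and $U^{(y)}(t)=Y(t)+R^{(y)}(t)-R^{(y)}(T_k)$; at $T_{k+1}$, $L^{(y)}$ jumps by $(U^{(y)}(T_{k+1}-)-a)^+$ and $U^{(y)}(T_{k+1})=\min\{U^{(y)}(T_{k+1}-),a\}$.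 Thus $R^{(y)}$ is the cumulative capital injection (classical reflection at $0$) and $L^{(y)}$ the cumulative periodic dividend (reflection at $a$ at Poisson times). *)

From HB Require Import structures.
From mathcomp Require Import all_boot all_order all_algebra.
From mathcomp Require Import all_classical all_reals all_analysis.
Set Implicit Arguments. Unset Strict Implicit. Unset Printing Implicit Defensive.
Import Order.TTheory GRing.Theory Num.Theory.
Import numFieldNormedType.Exports.
Local Open Scope classical_set_scope.
Local Open Scope ring_scope.

(* Periodic-classical barrier strategy at level a, driven by the path  *)
(* y + x(.) , with Poisson observation times T 0 = 0 < T 1 < T 2 < ...   *)
Section Strategy.
Variables (R : realType) (x : R -> R) (T : nat -> R) (a y : R).

(* Y on [T k, T (k+1)) given the post-dividend value u = U(T k) *)
Definition pcY (u : R) (k : nat) (s : R) : R := u + x s - x (T k).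

(* amount of capital injected on [T k, t]: max{0, sup_{s in [T k,t]} -Y(s)} *)
Definition pcInj (u : R) (k : nat) (t : R) : R :=
  Num.max 0 (sup ((fun s => - pcY u k s) @` [set` `[T k, t]])).

(* state at the observation times: (U(T k), R(T k), L(T k)) *)
Fixpoint pcState (k : nat) : R * R * R :=
  match k with
  | 0%N => (y, 0, 0)
  | k'.+1 =>
      let: (u, r, l) := pcState k' in
      let m := pcInj u k' (T k) in
      let pre := pcY u k' (T k) + m in      (* U(T k -) *)
      (Num.min pre a, r + m, l + Num.max (pre - a) 0)
  end.

Definition pcIdx (t : R) : nat := xget 0%N [set k | T k <= t < T k.+1].

Definition pcU (t : R) : R :=
  let k := pcIdx t in let: (u, _, _) := pcState k in
  pcY u k t + pcInj u k t.

Definition pcR (t : R) : R :=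
  let k := pcIdx t in let: (u, r, _) := pcState k in
  r + pcInj u k t.

Definition pcL (t : R) : R :=
  let k := pcIdx t in let: (_, _, l) := pcState k in l.

End Strategy.

Local Open Scope ereal_scope.

Definition is_levy {d} {Omega : measurableType d} {R : realType}
  (P : probability Omega R) (X : Omega -> R -> R) : Prop :=
  (forall w, X w 0%R = 0%R) /\
      (forall t, measurable_fun setT (fun w => X w t)) /\
      (forall w t, (X w s @[s --> at_right t] --> X w t)
                   /\ cvg (X w s @[s --> at_left t])) /\
      (forall (n : nat) (ts : nat -> R) (B : nat -> set R),
         (0 <= ts 0%N)%R -> (forall i, (i < n)%N -> (ts i <= ts i.+1)%R) ->
         (forall i, measurable (B i)) ->
         P [set w | forall i, (i < n)%N -> (X w (ts i.+1) - X w (ts i))%R \in B i]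
         = \prod_(i < n) P [set w | (X w (ts i.+1) - X w (ts i))%R \in B i]) /\
      (forall (s t : R) (B : set R), (0 <= s)%R -> (s <= t)%R -> measurable B ->
         P [set w | (X w t - X w s)%R \in B] = P [set w | X w (t - s)%R \in B]) /\
      (forall (t e : R), (0 <= t)%R -> (0 < e)%R ->
         (P [set w | (e < `|X w s - X w t|)%R]) @[s --> t] --> 0).

Definition is_poisson {d} {Omega : measurableType d} {R : realType}
  (P : probability Omega R) (r : R) (N : Omega -> R -> nat)
  (T : Omega -> nat -> R) : Prop :=
  (forall w, T w 0%N = 0%R) /\
      (forall w k, (T w k < T w k.+1)%R) /\
      (forall w (M : R), exists k, (M < T w k)%R) /\
      (forall w t k, (0 <= t)%R -> (N w t = k <-> (T w k <= t < T w k.+1)%R)) /\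
      (forall t k, measurable [set w | N w t = k]) /\
      (forall (n : nat) (ts : nat -> R) (ks : nat -> nat),
         (0 <= ts 0%N)%R -> (forall i, (i < n)%N -> (ts i <= ts i.+1)%R) ->
         P [set w | forall i, (i < n)%N -> (N w (ts i.+1) - N w (ts i))%N = ks i]
         = \prod_(i < n) P [set w | (N w (ts i.+1) - N w (ts i))%N = ks i]) /\
      (forall (s t : R) (k : nat), (0 <= s)%R -> (s <= t)%R ->
         P [set w | (N w t - N w s)%N = k]
         = (expR (- (r * (t - s))) * (r * (t - s)) ^+ k / (k`!)%:R)%:E).

Definition indep_XN {d} {Omega : measurableType d} {R : realType}
  (P : probability Omega R) (X : Omega -> R -> R) (N : Omega -> R -> nat) : Prop :=
  forall (n m : nat) (ss : nat -> R) (B : nat -> set R) (ts : nat -> R)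
         (ks : nat -> nat),
    (forall i, measurable (B i)) ->
    (forall i, (0 <= ss i)%R) -> (forall j, (0 <= ts j)%R) ->
    P ([set w | forall i, (i < n)%N -> X w (ss i) \in B i]
        `&` [set w | forall j, (j < m)%N -> N w (ts j) = ks j])
    = P [set w | forall i, (i < n)%N -> X w (ss i) \in B i]
      * P [set w | forall j, (j < m)%N -> N w (ts j) = ks j].

(* The statement holds for every sample path; only the cadlag property of X
   and the shape of the arrival times are used.  Between observation times,
   the injection started from level u is the reflection [max 0 (M - u)] of the
   running supremum M of the negative increments of the path; for u' <= u the
   difference [max 0 (M - u) - max 0 (M - u')] lies in [[-(u - u'), 0]] and is
   non-increasing in M.  At an observation time the pre-dividend surplus p is
   split into [min p a] and [max (p - a) 0], whose differences add up to the
   difference of the p's.  Hence [dU + dL - dR] is conserved and equals eps,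
   while dU and dR can only decrease and dL only increase.  Cadlag paths are
   bounded on segments, so all the suprema involved are finite. *)
From HB Require Import structures.
From mathcomp Require Import all_boot all_order all_algebra.
From mathcomp Require Import all_classical all_reals all_analysis.
From mathcomp Require Import lra.
Import Order.TTheory GRing.Theory Num.Theory.
Import numFieldNormedType.Exports.
Local Open Scope classical_set_scope.
Local Open Scope ring_scope.

Section RealFacts.
Variable R : realType.
Set Implicit Arguments. Unset Strict Implicit.

Lemma sup_addr (g : R -> R) (I : set R) (c : R) :
  I !=set0 -> has_ubound (g @` I) ->
  sup ((fun s => g s + c) @` I) = sup (g @` I) + c.
Proof.
move=> [s0 Is0] ubg.
have supg : has_sup (g @` I) by split => //; exists (g s0), s0.
have le_supg s : I s -> g s <= sup (g @` I).
  by move=> Is; apply: sup_upper_bound => //; exists s.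
have supgc : has_sup ((fun s => g s + c) @` I).
  split; first by exists (g s0 + c), s0.
  by exists (sup (g @` I) + c) => _ [s Is <-]; rewrite lerD2r le_supg.
apply/le_anti/andP; split.
- by apply: ge_sup => [|_ [s Is <-]]; [case: supgc | rewrite lerD2r le_supg].
- rewrite -lerBrDr; apply: ge_sup => [|_ [s Is <-]]; first by case: supg.
  by rewrite lerBrDr; apply: sup_upper_bound => //; exists s.
Qed.

Lemma max_cases (p q : R) :
  (Num.max p q = q /\ p <= q) \/ (Num.max p q = p /\ q <= p).
Proof. by case: (leP p q) => h; [left | right; split => //; exact: ltW]. Qed.

Lemma min_cases (p q : R) :
  (Num.min p q = p /\ p <= q) \/ (Num.min p q = q /\ q <= p).
Proof. by case: (leP p q) => h; [left | right; split => //; exact: ltW]. Qed.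

Local Ltac case_minmax := repeat match goal with
  | |- context [Num.max ?p ?q] =>
      let h := fresh in have [[-> h] | [-> h]] := max_cases p q
  | |- context [Num.min ?p ?q] =>
      let h := fresh in have [[-> h] | [-> h]] := min_cases p q
  end.

Lemma le_max0 (z : R) : z <= Num.max 0 z.
Proof. by rewrite le_max lexx orbT. Qed.

Lemma reflect_diff_bounds (u u' M : R) : u' <= u ->
  - (u - u') <= Num.max 0 (M - u) - Num.max 0 (M - u') <= 0.
Proof. by move=> ?; case_minmax; apply/andP; split; lra. Qed.

Lemma reflect_diff_nonincr (u u' M1 M2 : R) : u' <= u -> M1 <= M2 ->
  Num.max 0 (M2 - u) - Num.max 0 (M2 - u')
  <= Num.max 0 (M1 - u) - Num.max 0 (M1 - u').
Proof. by move=> ? ?; case_minmax; lra. Qed.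

Lemma barrier_split (a p p' : R) : 0 <= a -> 0 <= p' -> p' <= p ->
  [/\ 0 <= Num.min p' a, Num.min p' a <= Num.min p a,
      Num.max (p' - a) 0 <= Num.max (p - a) 0 &
      (Num.min p a - Num.min p' a) + (Num.max (p - a) 0 - Num.max (p' - a) 0)
      = p - p'].
Proof. by move=> ? ? ?; case_minmax; split; lra. Qed.

Lemma cadlag_locally_bounded (f : R -> R) (t : R) :
  f s @[s --> at_right t] --> f t -> cvg (f s @[s --> at_left t]) ->
  exists B, \forall s \near t, `|f s| <= B.
Proof.
move=> ft_right fl_left; set l := lim (f s @[s --> at_left t]).
have near_right : \forall s \near t, t < s -> `|f t - f s| < 1.
  by have : \forall s \near at_right t, `|f t - f s| < 1 by exact: cvgr_dist_lt.
have near_left : \forall s \near t, s < t -> `|l - f s| < 1.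
  by have : \forall s \near at_left t, `|l - f s| < 1 by exact: cvgr_dist_lt.
exists (Num.max (`|f t| + 1) (`|l| + 1)); near=> s; rewrite le_max.
have [st|ts|->] := ltgtP s t.
- have close : `|l - f s| < 1 by move: st; near: s.
  have tri : `|f s| <= `|f s - l| + `|l|.
    by rewrite -{1}(subrK l (f s)) ler_normD.
  by rewrite distrC in close; apply/orP; right; lra.
- have close : `|f t - f s| < 1 by move: ts; near: s.
  have tri : `|f s| <= `|f s - f t| + `|f t|.
    by rewrite -{1}(subrK (f t) (f s)) ler_normD.
  by rewrite distrC in close; apply/orP; left; lra.
- by rewrite lerDl ler01.
Unshelve. all: end_near.
Qed.

Lemma cadlag_bounded_segment (f : R -> R) :
  (forall t, f s @[s --> at_right t] --> f t /\ cvg (f s @[s --> at_left t])) ->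
  forall c d, exists B, forall s, c <= s <= d -> `|f s| <= B.
Proof.
move=> cadlag c d.
have /compact_near_coveringP cover := @segment_compact R c d.
have [|M [_ bndM]] := cover R (pinfty_nbhs R) (fun M s => `|f s| <= M).
  move=> s _; have [ft_right fl_left] := cadlag s.
  have [B nearB] := cadlag_locally_bounded ft_right fl_left.
  have geB : \forall M \near +oo, B <= M by apply: nbhs_pinfty_ge; exact: num_real.
  near=> s' M; apply: (le_trans (_ : `|f s'| <= B)); first by near: s'.
  by rewrite /=; near: M.
by exists (M + 1) => s cs; apply: (bndM (M + 1)); [lra | rewrite /= in_itv].
Unshelve. all: end_near.
Qed.

End RealFacts.

Section Strategy.
Set Implicit Arguments. Unset Strict Implicit.
Variables (R : realType) (x : R -> R) (T : nat -> R) (a : R).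
Hypotheses (T0 : T 0%N = 0) (T_incr : forall k, T k < T k.+1)
  (T_unbounded : forall M, exists k, M < T k)
  (x_bounded : forall c d, exists B, forall s, c <= s <= d -> `|x s| <= B)
  (a_ge0 : 0 <= a).

Lemma T_leq : {homo T : j k / (j <= k)%N >-> j <= k}.
Proof. by apply/nondecreasing_seqP => k; exact: ltW. Qed.

Lemma pcIdxP t : 0 <= t -> T (pcIdx T t) <= t < T (pcIdx T t).+1.
Proof.
move=> t_ge0; apply: (@xgetPex _ 0%N [set k | T k <= t < T k.+1]).
have [n0 tn0] := T_unbounded t.
have [[|n] tn n_min] := ex_minnP (ex_intro (fun n => t < T n) n0 tn0).
  by move: tn t_ge0; rewrite T0; lra.
by exists n => /=; rewrite tn andbT leNgt; apply/negP => /n_min; rewrite ltnn.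
Qed.

Lemma pcIdx_le s t : 0 <= s -> s <= t -> (pcIdx T s <= pcIdx T t)%N.
Proof.
move=> s_ge0 st; have /andP [s_ge _] := pcIdxP s_ge0.
have /andP [_ t_lt] := pcIdxP (le_trans s_ge0 st).
by rewrite leqNgt; apply/negP => /T_leq; lra.
Qed.

Definition runsup k t := sup ((fun s => - (x s - x (T k))) @` [set` `[T k, t]]).

Lemma runsup_ubound k t :
  has_ubound ((fun s => - (x s - x (T k))) @` [set` `[T k, t]]).
Proof.
have [B bndB] := x_bounded (T k) t.
exists (B + `|x (T k)|) => _ [s /= ks <-]; rewrite in_itv /= in ks.
have := bndB s ks; have := ler_norm (x (T k)); have := ler_norm (- x s).
rewrite normrN; lra.
Qed.

Lemma runsup_ge k t s : T k <= s <= t -> - (x s - x (T k)) <= runsup k t.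
Proof.
move=> ks; apply: sup_upper_bound; last by exists s; rewrite //= in_itv.
split; last exact: runsup_ubound.
by exists (- (x s - x (T k))), s; rewrite //= in_itv.
Qed.

Lemma runsup_le_runsup k t1 t2 : T k <= t1 -> t1 <= t2 -> runsup k t1 <= runsup k t2.
Proof.
move=> kt1 t12; apply: ge_sup; first by exists (- (x (T k) - x (T k))), (T k);
  rewrite //= in_itv /= lexx.
by move=> _ [s /= ks <-]; apply: runsup_ge; move: ks; rewrite in_itv /=; lra.
Qed.

Lemma pcInjE u k t : T k <= t -> pcInj x T u k t = Num.max 0 (runsup k t - u).
Proof.
move=> kt; rewrite /pcInj /runsup -sup_addr; first last.
- exact: runsup_ubound.
- by exists (T k); rewrite /= in_itv /= lexx.
by congr (Num.max 0 (sup _)); congr image; apply: boolp.funext => s; rewrite /pcY; lra.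
Qed.

Section Recursion.
Variable y : R.

Definition U_at k := (pcState x T a y k).1.1.
Definition R_at k := (pcState x T a y k).1.2.
Definition L_at k := (pcState x T a y k).2.

Definition injection k := Num.max 0 (runsup k (T k.+1) - U_at k).

(* U(T (k+1) -), the surplus just before the (k+1)-st dividend decision *)
Definition pre_dividend k := U_at k + (x (T k.+1) - x (T k)) + injection k.

Lemma pcStateS k : pcState x T a y k.+1 =
  (Num.min (pre_dividend k) a, R_at k + injection k,
   L_at k + Num.max (pre_dividend k - a) 0).
Proof.
rewrite /pre_dividend /injection -pcInjE ?(ltW (T_incr k)) // /U_at /R_at /L_at /=.
by case: (pcState x T a y k) => [[u r] l]; rewrite /pcY /= addrA.
Qed.

Lemma U_atS k : U_at k.+1 = Num.min (pre_dividend k) a.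
Proof. by rewrite {1}/U_at pcStateS. Qed.

Lemma R_atS k : R_at k.+1 = R_at k + injection k.
Proof. by rewrite {1}/R_at pcStateS. Qed.

Lemma L_atS k : L_at k.+1 = L_at k + Num.max (pre_dividend k - a) 0.
Proof. by rewrite {1}/L_at pcStateS. Qed.

Lemma pre_dividend_ge0 k : 0 <= pre_dividend k.
Proof.
have := le_max0 (runsup k (T k.+1) - U_at k).
have : - (x (T k.+1) - x (T k)) <= runsup k (T k.+1).
  by apply: runsup_ge; rewrite lexx ltW.
rewrite /pre_dividend /injection; lra.
Qed.

Lemma pcR_E t : 0 <= t ->
  pcR x T a y t =
  R_at (pcIdx T t) + Num.max 0 (runsup (pcIdx T t) t - U_at (pcIdx T t)).
Proof.
move=> t_ge0; have /andP [kt _] := pcIdxP t_ge0.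
by rewrite /pcR /R_at /U_at -(pcInjE _ kt); case: (pcState _ _ _ _ _) => [[u r] l].
Qed.

Lemma pcU_E t : 0 <= t ->
  pcU x T a y t = U_at (pcIdx T t) + (x t - x (T (pcIdx T t)))
                  + Num.max 0 (runsup (pcIdx T t) t - U_at (pcIdx T t)).
Proof.
move=> t_ge0; have /andP [kt _] := pcIdxP t_ge0.
rewrite /pcU /U_at -(pcInjE _ kt).
by case: (pcState _ _ _ _ _) => [[u r] l]; rewrite /pcY /=; lra.
Qed.

Lemma pcL_E t : pcL x T a y t = L_at (pcIdx T t).
Proof. by rewrite /pcL /L_at; case: (pcState _ _ _ _ _) => [[u r] l]. Qed.

End Recursion.

Section Comparison.
Variables (y eps : R).
Hypothesis eps_ge0 : 0 <= eps.

Definition dU k := U_at (y + eps) k - U_at y k.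
Definition dR k := R_at (y + eps) k - R_at y k.
Definition dL k := L_at (y + eps) k - L_at y k.

Definition dInj k t :=
  Num.max 0 (runsup k t - U_at (y + eps) k) - Num.max 0 (runsup k t - U_at y k).

Lemma U_at_le k : U_at y k <= U_at (y + eps) k.
Proof.
elim: k => [|k IH]; first by rewrite /U_at /= lerDl.
have le_pre : pre_dividend y k <= pre_dividend (y + eps) k.
  have := reflect_diff_bounds (runsup k (T k.+1)) IH.
  by rewrite /pre_dividend /injection; lra.
by rewrite !U_atS; have [] := barrier_split a_ge0 (pre_dividend_ge0 y k) le_pre.
Qed.

Lemma dInj_bounds k t : - dU k <= dInj k t <= 0.
Proof. exact: reflect_diff_bounds (U_at_le k). Qed.

Lemma dInj_nonincr k t1 t2 : T k <= t1 -> t1 <= t2 -> dInj k t2 <= dInj k t1.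
Proof. by move=> ? ?; apply: reflect_diff_nonincr (U_at_le k) (runsup_le_runsup _ _). Qed.

Lemma comparison_step k :
  [/\ dR k.+1 = dR k + dInj k (T k.+1), dU k.+1 <= dU k + dInj k (T k.+1),
      dL k <= dL k.+1 & dU k.+1 + dL k.+1 - dR k.+1 = dU k + dL k - dR k].
Proof.
have dInj_bnd := dInj_bounds k (T k.+1).
have le_pre : pre_dividend y k <= pre_dividend (y + eps) k.
  by move: dInj_bnd; rewrite /pre_dividend /injection /dInj /dU; lra.
have [_ _ le_div split_pre] := barrier_split a_ge0 (pre_dividend_ge0 y k) le_pre.
move: le_pre dInj_bnd le_div split_pre.
by rewrite /dR /dU /dL !U_atS !R_atS !L_atS /pre_dividend /injection /dInj; split; lra.
Qed.

Lemma gap_conserved k : dU k + dL k - dR k = eps.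
Proof.
elim: k => [|k IH]; first by rewrite /dU /dL /dR /U_at /R_at /L_at /=; lra.
by have [_ _ _ ->] := comparison_step k.
Qed.

Lemma nonincr_by_dInj (f : nat -> R) :
  (forall k, f k.+1 <= f k + dInj k (T k.+1)) ->
  {homo f : j k / (j <= k)%N >-> k <= j}.
Proof.
by move=> f_step; apply/nonincreasing_seqP => k;
  have := f_step k; have := dInj_bounds k (T k.+1); lra.
Qed.

Lemma dR_nonincr : {homo dR : j k / (j <= k)%N >-> k <= j}.
Proof. by apply: nonincr_by_dInj => k; have [->] := comparison_step k. Qed.

Lemma dL_nondecr : {homo dL : j k / (j <= k)%N >-> j <= k}.
Proof. by apply/nondecreasing_seqP => k; have [_ _ ->] := comparison_step k. Qed.

Lemma dR_le0 k : dR k <= 0.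
Proof. by have := dR_nonincr (leq0n k); rewrite /dR /R_at /=; lra. Qed.

Lemma dL_ge0 k : 0 <= dL k.
Proof. by have := dL_nondecr (leq0n k); rewrite /dL /L_at /=; lra. Qed.

Lemma pcR_diffE t : 0 <= t ->
  pcR x T a (y + eps) t - pcR x T a y t = dR (pcIdx T t) + dInj (pcIdx T t) t.
Proof. by move=> t_ge0; rewrite !pcR_E // /dR /dInj; lra. Qed.

Lemma pcU_diffE t : 0 <= t ->
  pcU x T a (y + eps) t - pcU x T a y t = dU (pcIdx T t) + dInj (pcIdx T t) t.
Proof. by move=> t_ge0; rewrite !pcU_E // /dU /dInj; lra. Qed.

Lemma pcL_diffE t : pcL x T a (y + eps) t - pcL x T a y t = dL (pcIdx T t).
Proof. by rewrite !pcL_E. Qed.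

(* The R- and U-differences at time t both have this form. *)
Lemma diff_nonincr (d : nat -> R) :
  (forall k, d k.+1 <= d k + dInj k (T k.+1)) ->
  forall s t, 0 <= s -> s <= t ->
  d (pcIdx T t) + dInj (pcIdx T t) t <= d (pcIdx T s) + dInj (pcIdx T s) s.
Proof.
move=> d_step s t s_ge0 st; have d_nonincr := nonincr_by_dInj d_step.
have /andP [js js'] := pcIdxP s_ge0.
have jk := pcIdx_le s_ge0 st.
move: jk; set j := pcIdx T s; set k := pcIdx T t.
rewrite leq_eqVlt => /orP [/eqP <- | jk].
  by have := dInj_nonincr js st; lra.
have := dInj_bounds k t; have := d_nonincr _ _ jk; have := d_step j.
by have := dInj_nonincr js (ltW js'); lra.
Qed.

Lemma pcStrategy_comparison :
  let DR t := pcR x T a (y + eps) t - pcR x T a y t in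
  let DU t := pcU x T a (y + eps) t - pcU x T a y t in
  let DL t := pcL x T a (y + eps) t - pcL x T a y t in
  (forall s t, 0 <= s -> s <= t -> DR t <= DR s) /\
  (forall t, 0 <= t -> - eps <= DR t <= 0) /\
  (forall s t, 0 <= s -> s <= t -> DU t <= DU s) /\
  (forall t, 0 <= t -> 0 <= DU t <= eps) /\
  (forall s t, 0 <= s -> s <= t -> DL s <= DL t) /\
  (forall t, 0 <= t -> 0 <= DL t <= eps).
Proof.
move=> DR DU DL.
have facts k t : [/\ - dU k <= dInj k t <= 0, dU k + dL k - dR k = eps,
                     0 <= dU k, 0 <= dL k & dR k <= 0].
  by split; rewrite ?gap_conserved ?dInj_bounds ?dL_ge0 ?dR_le0 ?subr_ge0 ?U_at_le.
split.
  move=> s t s_ge0 st; rewrite /DR !pcR_diffE //; last exact: le_trans st.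
  by apply: diff_nonincr => // k; have [->] := comparison_step k.
split.
  move=> t t_ge0; rewrite /DR pcR_diffE //.
  by have [/andP [? ?] ? ? ? ?] := facts (pcIdx T t) t; apply/andP; split; lra.
split.
  move=> s t s_ge0 st; rewrite /DU !pcU_diffE //; last exact: le_trans st.
  by apply: diff_nonincr => // k; have [_ ->] := comparison_step k.
split.
  move=> t t_ge0; rewrite /DU pcU_diffE //.
  by have [/andP [? ?] ? ? ? ?] := facts (pcIdx T t) t; apply/andP; split; lra.
split.
  by move=> s t s_ge0 st; rewrite /DL !pcL_diffE; apply/dL_nondecr/pcIdx_le.
move=> t _; rewrite /DL pcL_diffE.
by have [_ ? ? ? ?] := facts (pcIdx T t) t; apply/andP; split; lra.
Qed.

End Comparison.

End Strategy.

Theorem mainTheorem3 {d} (Omega : measurableType d) (R : realType)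
  (P : probability Omega R) (X : Omega -> R -> R) (r : R)
  (N : Omega -> R -> nat) (T : Omega -> nat -> R) (a : R) :
  is_levy P X -> 0 < r -> is_poisson P r N T -> indep_XN P X N ->
  0 <= a ->
  forall x eps : R, 0 <= x -> 0 < eps ->
  {ae P, forall w,
    let DR t := pcR (X w) (T w) a (x + eps) t - pcR (X w) (T w) a x t in
    let DU t := pcU (X w) (T w) a (x + eps) t - pcU (X w) (T w) a x t in
    let DL t := pcL (X w) (T w) a (x + eps) t - pcL (X w) (T w) a x t in
    (forall s t, 0 <= s -> s <= t -> DR t <= DR s) /\
        (forall t, 0 <= t -> - eps <= DR t <= 0) /\
        (forall s t, 0 <= s -> s <= t -> DU t <= DU s) /\
        (forall t, 0 <= t -> 0 <= DU t <= eps) /\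
        (forall s t, 0 <= s -> s <= t -> DL s <= DL t) /\
        (forall t, 0 <= t -> 0 <= DL t <= eps)}.
Proof.
move=> [_ [_ [cadlag _]]] _ [T0 [T_incr [T_unbounded _]]] _ a_ge0 x eps _ eps_gt0.
apply: aeW => w.
exact: (pcStrategy_comparison (T0 w) (T_incr w) (T_unbounded w)
  (cadlag_bounded_segment (cadlag w)) a_ge0 x (ltW eps_gt0)).
Qed.
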